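(* For every $n>2$ and every $c\geq1$, $$\rho_{n,(1,1,c)}=\frac{n-2}{n}\cdot\frac{1}{1-(2/n)^c}.$$
   Context: Let $X$ be a finite alphabet with $n\geq 2$ letters and $X^*$ the set of words over $X$; $|v|$ is the length of a word $v$. A code over $X$ is a finite sequence $C=(v_1,\ldots,v_m)$ of words over $X$ such that every $w\in X^*$ has at most one factorization into code-words: if $w=v_{i_1}\cdots v_{i_l}=v_{j_1}\cdots v_{j_{l'}}$ with $l,l'\geq1$, then $l=l'$ and $i_t=j_t$ for all $t$. (Codes are sequences, not sets.) A code $C=(v_1,\ldots,v_m)$ is a prefix code if for all $i,j$, $v_i$ is a prefix of $v_j$ if and only if $i=j$. For a finite sequence $L=(a_1,\ldots,a_m)$ of positive integers, $UD_n(L)$ is the set of all codes $(v_1,\ldots,v_m)$ over an $n$-letter alphabet with $|v_i|=a_i$ for all $i$, $PR_n(L)\subseteq UD_n(L)$ is the subset of prefix codes, and $\rho_{n,L}=|PR_n(L)|/|UD_n(L)|$. *)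

From mathcomp Require Import all_boot all_order all_algebra.
From mathcomp Require Import boolp.

Set Implicit Arguments.
Unset Strict Implicit.
Unset Printing Implicit Defensive.

Import GRing.Theory Num.Theory.

(* The word v_{i_1} ... v_{i_l} for an index sequence s = (i_1,...,i_l)
   (indices are 0-based). *)
Definition concat_idx (n : nat) (C : seq (seq 'I_n)) (s : seq nat) : seq 'I_n :=
  flatten [seq nth [::] C i | i <- s].

Definition is_code (n : nat) (C : seq (seq 'I_n)) : Prop :=
  forall s t : seq nat,
    s != [::] -> t != [::] ->
    all (fun i => i < size C) s -> all (fun i => i < size C) t ->
    concat_idx C s = concat_idx C t -> s = t.

Definition is_prefix_code (n : nat) (C : seq (seq 'I_n)) : Prop :=
  is_code C /\
  forall i j, i < size C -> j < size C ->
    (prefix (nth [::] C i) (nth [::] C j) <-> i = j).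

(* Sequences of words (v_1,...,v_m) with |v_i| = a_i, for L = (a_1,...,a_m):
   the finite type of dependent tuples. *)
Definition wordseq_type (n : nat) (L : seq nat) :=
  {dffun forall i : 'I_(size L), (nth 0 L i).-tuple 'I_n}.

Definition seq_of (n : nat) (L : seq nat) (f : wordseq_type n L) : seq (seq 'I_n) :=
  [seq tval (f i) | i <- enum 'I_(size L)].

Definition UD (n : nat) (L : seq nat) : {set wordseq_type n L} :=
  [set f | `[< is_code (seq_of f) >]].

Definition PR (n : nat) (L : seq nat) : {set wordseq_type n L} :=
  [set f | `[< is_prefix_code (seq_of f) >]].

Definition rho (n : nat) (L : seq nat) : rat :=
  (#|PR n L|%:R / #|UD n L|%:R)%R.

From mathcomp Require Import all_boot all_order all_algebra.
From mathcomp Require boolp.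
From mathcomp Require Import ring.

Set Implicit Arguments.
Unset Strict Implicit.
Unset Printing Implicit Defensive.

Import GRing.Theory Num.Theory.

(* A sequence of words with lengths (1, 1, c) is a triple (a, b, w) of two
   letters and a word of length c.  The proof has two parts.

   Call a letter foreign if it is neither a nor b.  For a
   nonempty word w, the sequence ([a], [b], w) is a code iff a != b and w
   contains a foreign letter: if w has no foreign letter it is itself a
   product of the one-letter code-words, and conversely the first foreign
   letter of any concatenation of code-words lies no earlier than the first
   foreign letter of w, which rules out a clash between w and a one-letter
   word and yields unique decodability by induction.  Similarly the sequence
   is a prefix code iff a != b and the first letter of w is foreign.

   Counting.  Summing over the n(n-1) ordered pairs of distinct letters,
   |UD_n(1,1,c)| = n(n-1)(n^c - 2^c) and |PR_n(1,1,c)| = n(n-1)(n-2)n^(c-1);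
   the theorem is the quotient of these two numbers. *)

Lemma concat_idx_cons n (C : seq (seq 'I_n)) i s :
  concat_idx C (i :: s) = nth [::] C i ++ concat_idx C s.
Proof. by []. Qed.

Section ThreeWordCode.
Variables (n : nat) (a b : 'I_n) (w : seq 'I_n).

Local Notation C := [:: [:: a]; [:: b]; w].

Definition foreign (x : 'I_n) : bool := (x != a) && (x != b).

Local Notation valid s := (all (fun i => i < 3) s).

Lemma concat_letters (u : seq 'I_n) :
  all (fun x => (x == a) || (x == b)) u ->
  concat_idx C [seq (if x == a then 0 else 1) | x <- u] = u.
Proof.
elim: u => [|x u IHu] //= /andP[xab /IHu {}IHu].
rewrite concat_idx_cons IHu; case: eqP => [-> //|xNa].
by case/orP: xab => /eqP xab; [case: xNa | rewrite xab].
Qed.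

Hypotheses (wne : w != [::]) (aNb : a != b) (w_foreign : has foreign w).

Lemma code_word_nonempty i : i < 3 -> nth [::] C i != [::].
Proof. by case: i => [|[|[|i]]]. Qed.

Lemma find_foreign_concat (t : seq nat) : valid t ->
  has foreign (concat_idx C t) -> find foreign w <= find foreign (concat_idx C t).
Proof.
elim: t => [|i t IHt] //= /andP[+ /IHt {}IHt]; rewrite concat_idx_cons.
case: i => [|[|[|i]]] // _ /=; last by rewrite find_cat w_foreign.
- by rewrite /foreign eqxx /= => /IHt /leqW.
- by rewrite /foreign eqxx andbF /= => /IHt /leqW.
Qed.

Lemma concat_letter_neq_w x s t : ~~ foreign x -> valid s ->
  x :: concat_idx C s <> w ++ concat_idx C t.
Proof.
move=> xNf vs e.
have xs_foreign : has foreign (concat_idx C s).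
  by move: (has_cat foreign w (concat_idx C t)); rewrite -e /= (negbTE xNf) w_foreign.
have := congr1 (find foreign) e; rewrite find_cat w_foreign /= (negbTE xNf).
by move=> find_eq; have := find_foreign_concat vs xs_foreign; rewrite -find_eq ltnn.
Qed.

Lemma concat_idx_inj s t : valid s -> valid t -> concat_idx C s = concat_idx C t -> s = t.
Proof.
have aNf : ~~ foreign a by rewrite /foreign eqxx.
have bNf : ~~ foreign b by rewrite /foreign eqxx andbF.
elim: s t => [|i s IHs] [|j t] //=.
- move=> _ /andP[/code_word_nonempty]; rewrite concat_idx_cons.
  by case: (nth [::] C j).
- move=> /andP[/code_word_nonempty]; rewrite concat_idx_cons.
  by case: (nth [::] C i).
move=> /andP[vi vs] /andP[vj vt]; rewrite !concat_idx_cons.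
case: i vi => [|[|[|i]]] // _; case: j vj => [|[|[|j]]] // _ /=.
- by case=> /(IHs t vs vt) ->.
- by case=> /eqP; rewrite (negbTE aNb).
- by move/(concat_letter_neq_w aNf vs).
- by case=> /esym/eqP; rewrite (negbTE aNb).
- by case=> /(IHs t vs vt) ->.
- by move/(concat_letter_neq_w bNf vs).
- by move/esym/(concat_letter_neq_w aNf vt).
- by move/esym/(concat_letter_neq_w bNf vt).
- by move/eqP; rewrite eqseq_cat // eqxx => /eqP/(IHs t vs vt) ->.
Qed.

End ThreeWordCode.

Lemma code_iff n (a b : 'I_n) (w : seq 'I_n) : w != [::] ->
  is_code [:: [:: a]; [:: b]; w] <-> (a != b) && has (foreign a b) w.
Proof.
move=> wne; split=> [C_code|/andP[aNb w_foreign] s t _ _]; last first.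
  exact: concat_idx_inj.
apply/andP; split.
  apply/eqP => ab; have := C_code [:: 0] [:: 1] isT isT isT isT.
  by rewrite /concat_idx /= ab => /(_ erefl).
apply/negPn/negP => /hasPn w_ab.
have {}w_ab : all (fun x => (x == a) || (x == b)) w.
  by apply/allP => x /w_ab; rewrite negb_and !negbK.
set s := [seq (if x == a then 0 else 1) | x <- w].
have s_valid : all (fun i => i < 3) s.
  by rewrite all_map; apply/allP => x _ /=; case: (x == a).
have sne : s != [::] by rewrite /s; case: (w) wne.
have := C_code s [:: 2] sne isT s_valid isT.
rewrite concat_letters // /concat_idx /= cats0 => /(_ erefl) s2.
have : 2 \in s by rewrite s2 inE.
by case/mapP=> x _; case: (x == a).
Qed.

Lemma prefix_code_iff n (a b x : 'I_n) (w : seq 'I_n) :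
  is_prefix_code [:: [:: a]; [:: b]; x :: w] <-> [&& a != b, x != a & x != b].
Proof.
split=> [[_ C_prefix]|/and3P[aNb xNa xNb]].
  have [/= + _] := C_prefix 0 1 isT isT; have [/= + _] := C_prefix 0 2 isT isT.
  have [/= + _] := C_prefix 1 2 isT isT; rewrite !prefix0s !andbT.
  case: (b =P x) => [_ /(_ isT) //|bNx _]; case: (a =P x) => [_ /(_ isT) //|aNx _].
  case: (a =P b) => [_ /(_ isT) //|aNb _].
  by rewrite ![x == _]eq_sym; apply/and3P; split; apply/eqP.
split; first by apply/code_iff => //=; rewrite aNb /foreign xNa xNb.
move=> i j; case: i => [|[|[|i]]] // _; case: j => [|[|[|j]]] // _ /=;
  rewrite ?prefix0s ?andbT ?eqxx ?prefix_refl ?(eq_sym b a) ?(eq_sym a x) ?(eq_sym b x);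
  by rewrite ?(negbTE aNb) ?(negbTE xNa) ?(negbTE xNb).
Qed.

Section TupleCounting.
Variable T : finType.

Lemma card_tuple_cons m (P : pred T) (R : pred (m.-tuple T)) :
  #|[pred t : m.+1.-tuple T | P (thead t) && R [tuple of behead t]]| = #|P| * #|R|.
Proof.
pose cons_tuple (p : T * m.-tuple T) : m.+1.-tuple T := [tuple of p.1 :: p.2].
have cons_bij : bijective cons_tuple.
  exists (fun t => (thead t, [tuple of behead t])).
    by case=> x t; congr pair; apply: val_inj.
  by move=> t; apply: val_inj; rewrite /= [in RHS](tuple_eta t).
rewrite -[LHS]sum1_card (reindex cons_tuple (onW_bij _ cons_bij)) -cardX -sum1_card.
apply: eq_bigl => -[x t]; rewrite !inE /=.
by have -> : [tuple of behead [tuple of x :: t]] = t by apply: val_inj.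
Qed.

Lemma card_tuple_all m (P : pred T) : #|[pred t : m.-tuple T | all P t]| = #|P| ^ m.
Proof.
elim: m => [|m IHm].
  rewrite expn0 -[RHS](card_tuple 0 T); apply: eq_card => t.
  by rewrite !inE; case: t => [[]].
rewrite expnS -IHm -card_tuple_cons; apply: eq_card => t.
by rewrite !inE [in LHS](tuple_eta t).
Qed.

End TupleCounting.

Lemma card_fibered (A W : finType) (P : pred A) (R : A -> pred W) (S : {pred A * W}) :
  (forall a w, ((a, w) \in S) = P a && R a w) ->
  #|S| = \sum_(a | P a) #|[pred w | R a w]|.
Proof.
move=> S_def; under eq_bigr => a _ do rewrite -sum1_card.
by rewrite pair_big_dep sum1_card; apply: eq_card => -[a w]; rewrite S_def.
Qed.

Lemma sum_distinct_pairs n K (G : 'I_n * 'I_n -> nat) :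
  (forall ab, ab.1 != ab.2 -> G ab = K) ->
  \sum_(ab | ab.1 != ab.2) G ab = n * n.-1 * K.
Proof.
move=> G_const; rewrite (eq_bigr (fun _ => K)) // sum_nat_const; congr (_ * K).
rewrite (@card_fibered _ _ predT (fun a b => a != b)) //.
rewrite (eq_bigr (fun _ => n.-1)) ?sum_nat_const ?card_ord // => a _.
rewrite -[in RHS](card_ord n) -(cardC1 a).
by apply: eq_card => b; rewrite !inE eq_sym.
Qed.

Lemma card_foreign n (a b : 'I_n) : a != b -> #|[pred y | foreign a b y]| = n - 2.
Proof.
move=> aNb; have := cardC [set a; b]; rewrite cards2 aNb card_ord => n_split.
by rewrite -[X in _ = X - 2]n_split addKn; apply: eq_card => y; rewrite !inE negb_or.
Qed.

(* Words of length m containing a foreign letter: all words but those over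
   the two-letter alphabet {a, b}. *)
Lemma card_tuple_has_foreign n m (a b : 'I_n) : a != b ->
  #|[pred w : m.-tuple 'I_n | has (foreign a b) w]| = n ^ m - 2 ^ m.
Proof.
move=> aNb; have := cardC [pred w : m.-tuple 'I_n | has (foreign a b) w].
rewrite card_tuple card_ord => <-.
suff -> : #|[predC [pred w : m.-tuple 'I_n | has (foreign a b) w]]| = 2 ^ m.
  by rewrite addnK.
have <- : #|[set a; b]| = 2 by rewrite cards2 aNb.
rewrite -card_tuple_all; apply: eq_card => w; rewrite unfold_in /= !inE -all_predC.
by apply: eq_all => y; rewrite -[RHS]/(y \in [set a; b]) !inE /= negb_and !negbK.
Qed.

Lemma card_tuple_head_foreign n m (a b : 'I_n) : a != b ->
  #|[pred w : m.+1.-tuple 'I_n | foreign a b (thead w)]| = (n - 2) * n ^ m.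
Proof.
have n_tuples : #|{: m.-tuple 'I_n}| = n ^ m by rewrite card_tuple card_ord.
move=> aNb; rewrite -(card_foreign aNb) -n_tuples -card_tuple_cons.
by apply: eq_card => w; rewrite !inE andbT.
Qed.

Section LengthsOneOneC.
Variables (n c : nat).
Local Notation L := [:: 1; 1; c].
Local Notation triple := ('I_n * 'I_n * c.-tuple 'I_n)%type.

(* The k-th word of the sequence attached to (a, b, w); indices k >= 3 never
   occur and receive an arbitrary value. *)
Definition triple_word (x : triple) (k : nat) : (nth 0 L k).-tuple 'I_n :=
  match k as k return (nth 0 L k).-tuple 'I_n with
  | 0 => [tuple x.1.1]
  | 1 => [tuple x.1.2]
  | 2 => x.2
  | k.+3 => nseq_tuple _ x.1.1
  end.

Definition wordseq_of_triple (x : triple) : wordseq_type n L :=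
  [ffun i : 'I_3 => triple_word x i].

Let i0 : 'I_3 := @Ordinal 3 0 isT.
Let i1 : 'I_3 := @Ordinal 3 1 isT.
Let i2 : 'I_3 := @Ordinal 3 2 isT.

Definition triple_of_wordseq (f : wordseq_type n L) : triple :=
  (thead (f i0), thead (f i1), f i2).

Lemma seq_of_triple x : seq_of (wordseq_of_triple x) = [:: [:: x.1.1]; [:: x.1.2]; val x.2].
Proof.
have enum3 : enum 'I_3 = [:: i0; i1; i2].
  by apply: (inj_map val_inj); rewrite val_enum_ord.
by rewrite /seq_of enum3 /= !ffunE.
Qed.

Lemma wordseq_of_tripleK : cancel triple_of_wordseq wordseq_of_triple.
Proof.
move=> f; apply/ffunP => -[[|[|[|k]]] lt_k3] //; rewrite ffunE /=;
  have -> : lt_k3 = isT by exact: eq_irrelevance.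
- by apply: val_inj; case: (f i0) => -[|y []].
- by apply: val_inj; case: (f i1) => -[|y []].
- by [].
Qed.

Lemma triple_of_wordseqK : cancel wordseq_of_triple triple_of_wordseq.
Proof.
by move=> [[a b] w]; rewrite /triple_of_wordseq !ffunE.
Qed.

Lemma card_wordseq_triples (S : {set wordseq_type n L}) :
  #|S| = #|[set x : triple | wordseq_of_triple x \in S]|.
Proof.
have bij : bijective wordseq_of_triple.
  exact: Bijective triple_of_wordseqK wordseq_of_tripleK.
by rewrite -(on_card_preimset (onW_bij _ bij)); apply: eq_card => x; rewrite !inE.
Qed.

End LengthsOneOneC.

(* |UD_n(1,1,c+1)|: a sequence is a code iff a != b and w has a foreign letter. *)
Lemma card_UD n c : #|UD n [:: 1; 1; c.+1]| = n * n.-1 * (n ^ c.+1 - 2 ^ c.+1).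
Proof.
rewrite card_wordseq_triples (@card_fibered _ _ (fun ab => ab.1 != ab.2)
  (fun ab (w : c.+1.-tuple 'I_n) => has (foreign ab.1 ab.2) w)).
  by apply: sum_distinct_pairs => -[a b] /= /card_tuple_has_foreign.
move=> [a b] w; rewrite !inE seq_of_triple.
by apply/boolp.asboolP/idP => /code_iff; apply; case: w => [[]].
Qed.

(* |PR_n(1,1,c+1)|: a sequence is a prefix code iff a != b and the first
   letter of w is foreign. *)
Lemma card_PR n c : #|PR n [:: 1; 1; c.+1]| = n * n.-1 * ((n - 2) * n ^ c).
Proof.
rewrite card_wordseq_triples (@card_fibered _ _ (fun ab => ab.1 != ab.2)
  (fun ab (w : c.+1.-tuple 'I_n) => foreign ab.1 ab.2 (thead w))).
  by apply: sum_distinct_pairs => -[a b] /= /card_tuple_head_foreign.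
move=> [a b] /tupleP[x w]; rewrite !inE seq_of_triple theadE.
by apply/boolp.asboolP/idP => /= [/prefix_code_iff|?]; last apply/prefix_code_iff.
Qed.

Local Open Scope ring_scope.

Theorem mainTheorem8 (n c : nat) (hn : (2 < n)%N) (hc : (1 <= c)%N) :
  rho n [:: 1%N; 1%N; c] =
  ((n%:R - 2) / n%:R) * (1 - (2%:R / n%:R) ^+ c)^-1 :> rat.
Proof.
case: c hc => [//|c] _; rewrite /rho card_UD card_PR.
have n_ge2 : (2 <= n)%N by apply: ltnW.
have n_ge1 : (1 <= n)%N by apply: leq_trans n_ge2.
have pow_lt : (2 ^ c.+1 < n ^ c.+1)%N by rewrite ltn_exp2r.
have pow_le := ltnW pow_lt.
rewrite -subn1 !natrM !natrB // !natrX.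
set N : rat := n%:R.
have N_neq0 : N != 0 by rewrite pnatr_eq0 -lt0n.
have N1_neq0 : N - 1 != 0 by rewrite subr_eq0 pnatr_eq1 (gtn_eqF n_ge2).
have denom_neq0 : N ^+ c.+1 - 2%:R ^+ c.+1 != 0.
  by rewrite -!natrX -natrB // pnatr_eq0 subn_eq0 -ltnNge.
have one_sub_ratio : 1 - (2%:R / N) ^+ c.+1 = (N ^+ c.+1 - 2%:R ^+ c.+1) / N ^+ c.+1.
  by rewrite expr_div_n mulrBl divff ?expf_neq0.
rewrite one_sub_ratio invf_div exprS; field.
by rewrite -exprS denom_neq0 N_neq0 N1_neq0.
Qed.
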